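(* Let $P(\vec\alpha,\vec\beta,\vec\xi)\in\mathcal{P}$ be a syntactically compositional predicate and $P'(\vec\alpha,\vec\xi)\in\mathcal{P}$ a predicate which is a completion of $P$ with respect to a pair of constants $\vec c=(c_1,c_2)$. Then $P'(\vec\alpha,\vec\xi)\Leftrightarrow P(\vec\alpha,\vec c,\vec\xi)$ holds, and the entailment $\exists\vec\beta.\ P(\vec\alpha,\vec\beta,\vec\xi)\ast P'(\vec\beta,\vec\xi)\Rightarrow P'(\vec\alpha,\vec\xi)$ holds.
   Context: Separation logic setting: location variables (interpreted in a set $\mathbb{L}$ of locations, with a constant ${\sf nil}$) and data variables; pointer fields $\mathcal{F}$ and data fields $\mathcal{D}$. A state is $(s,h)$ with $s$ a stack assigning values to variables and $h$ a finite partial heap mapping (location, field) pairs to locations or data values. Formulas: pure parts (location (dis)equalities and data constraints in a decidable theory), spatial parts $\mathtt{emp}$, $E\mapsto\rho$, predicate atoms, $\ast$ (separating conjunction over domain-disjoint heaps), with $\land,\lor,\exists$. Predicates are defined by finite sets of rules $Q(E,\vec F)::=\exists\vec Z.\Pi\land\Sigma$ with least-fixed-point semantics; an entailment $A\Rightarrow B$ means every $(s,h)$ satisfying $A$ satisfies $B$; $\Leftrightarrow$ means entailment in both directions. Syntactic compositionality: $P$ has parameters $(\vec\alpha,\vec\beta,\vec\xi)$, $\vec\alpha=(E,C)$ (source), $\vec\beta=(F,H)$ (hole), $E,F$ location variables, $C,H$ data variables, $\vec\xi$ static parameters. $P$ is syntactically compositional if it has exactly one base rule $P(\vec\alpha,\vec\beta,\vec\xi)::=\alpha_1=\beta_1\land\alpha_2=\beta_2\land\mathtt{emp}$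 and at least one inductive rule, every inductive rule being of the form $P(\vec\alpha,\vec\beta,\vec\xi)::=\exists\vec Z.\ \Pi\land\Sigma_1\ast\Sigma_2\ast P(\vec\gamma,\vec\beta,\vec\xi)$ where $\Sigma_1$ is a nonempty separating conjunction of points-to atoms containing a unique points-to atom from $E$ and all location variables of $\vec Z$, whose Gaifman graph is a connected DAG rooted at $E$; $\Sigma_2$ is a possibly empty separating conjunction of predicate atoms whose first arguments are sink vertices of that graph; $\vec\gamma$ consists of variables of $\vec Z$; and the variables of $\vec\beta$ do not occur in $\Pi,\Sigma_1,\Sigma_2,\vec\gamma$. Completion: $P'$ with parameters $(\vec\alpha,\vec\xi)$ is a completion of $P$ with respect to $\vec c=(c_1,c_2)$ if its rules are obtained from those of $P$ by the substitution $\beta_1\mapsto c_1,\beta_2\mapsto c_2$: its only base rule is $P'(\vec\alpha,\vec\xi)::=\alpha_1=c_1\land\alpha_2=c_2\land\mathtt{emp}$, and for each inductive rule $P(\vec\alpha,\vec\beta,\vec\xi)::=\exists\vec Z.\ \Pi\land\Sigma_1\ast\Sigma_2\ast P(\vec\gamma,\vec\beta,\vec\xi)$ of $P$, $P'$ has the inductive rule $P'(\vec\alpha,\vec\xi)::=\exists\vec Z.\ \Pi\land\Sigma_1\ast\Sigma_2\ast P'(\vec\gamma,\vec\xi)$ (and these are all its rules). *)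

From Stdlib Require Import List Relations Permutation.
Import ListNotations.
Set Implicit Arguments.

Section SL.

Variables (L Dat : Type) (lnil : L).

Inductive var := LV (n : nat) | DV (n : nat).

Inductive term := TVar (x : var) | TNil | TDat (d : Dat).

Inductive Val := VL (l : L) | VD (d : Dat).

Definition fld := nat.

(** Pure atoms: (dis)equalities and atomic constraints of an arbitrary data
    theory (a relation applied to a list of terms). *)
Inductive patom :=
| PEq (t1 t2 : term)
| PNeq (t1 t2 : term)
| PRel (r : list Val -> Prop) (ts : list term).

Inductive satom :=
| PointsTo (x : term) (rho : list (fld * term))
| PredAt (p : nat) (args : list term).

(** A rule body [exists Z. Pi /\ Sigma]; the quantified variables [Z] are
    all the variables of the rule which are not formal parameters. *)
Record rule := mkRule { rpure : list patom; rspat : list satom }.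

Record pdef := mkPdef { params : list var; rules : list rule }.

Definition sid := nat -> pdef.

Record stack := mkStack { sl : nat -> L; sd : nat -> Dat }.
Definition heap := (L * fld)%type -> option Val.

Definition eval_var (s : stack) (x : var) : Val :=
  match x with LV n => VL (sl s n) | DV n => VD (sd s n) end.

Definition eval (s : stack) (t : term) : Val :=
  match t with TVar x => eval_var s x | TNil => VL lnil | TDat d => VD d end.

Definition hempty (h : heap) : Prop := forall k, h k = None.
Definition hdisj (h1 h2 : heap) : Prop := forall k, h1 k = None \/ h2 k = None.
Definition hunion (h h1 h2 : heap) : Prop :=
  forall k, h k = match h1 k with Some v => Some v | None => h2 k end.
Definition hfinite (h : heap) : Prop :=
  exists ks : list (L * fld), forall k, h k <> None -> In k ks.

Definition pts_heap (l : L) (vals : list (fld * Val)) (h : heap) : Prop :=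
  forall l' f v, h (l', f) = Some v <-> (l' = l /\ In (f, v) vals).

Definition psat_atom (s : stack) (a : patom) : Prop :=
  match a with
  | PEq t1 t2 => eval s t1 = eval s t2
  | PNeq t1 t2 => eval s t1 <> eval s t2
  | PRel r ts => r (map (eval s) ts)
  end.

Inductive psat (D : sid) : nat -> list Val -> heap -> Prop :=
| psat_rule p vals h r s :
    In r (rules (D p)) ->
    map (eval_var s) (params (D p)) = vals ->
    Forall (psat_atom s) (rpure r) ->
    ssat D s (rspat r) h ->
    psat D p vals h
with ssat (D : sid) : stack -> list satom -> heap -> Prop :=
| ssat_nil s h : hempty h -> ssat D s [] h
| ssat_pt s x rho rest l h1 h2 h :
    eval s x = VL l -> l <> lnil ->
    pts_heap l (map (fun ft => (fst ft, eval s (snd ft))) rho) h1 ->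
    ssat D s rest h2 -> hdisj h1 h2 -> hunion h h1 h2 ->
    ssat D s (PointsTo x rho :: rest) h
| ssat_pred s q args rest h1 h2 h :
    psat D q (map (eval s) args) h1 ->
    ssat D s rest h2 -> hdisj h1 h2 -> hunion h h1 h2 ->
    ssat D s (PredAt q args :: rest) h.

Inductive form :=
| FPure (a : patom)
| FEmp
| FPt (x : term) (rho : list (fld * term))
| FPred (p : nat) (args : list term)
| FStar (A B : form)
| FAnd (A B : form)
| FOr (A B : form)
| FEx (x : var) (A : form).

Definition upd_l (s : stack) (n : nat) (l : L) : stack :=
  mkStack (fun m => if Nat.eqb m n then l else sl s m) (sd s).
Definition upd_d (s : stack) (n : nat) (d : Dat) : stack :=
  mkStack (sl s) (fun m => if Nat.eqb m n then d else sd s m).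

Fixpoint sat (D : sid) (s : stack) (h : heap) (A : form) : Prop :=
  match A with
  | FPure a => psat_atom s a
  | FEmp => hempty h
  | FPt x rho => exists l, eval s x = VL l /\ l <> lnil /\
      pts_heap l (map (fun ft => (fst ft, eval s (snd ft))) rho) h
  | FPred p args => psat D p (map (eval s) args) h
  | FStar A B => exists h1 h2, hdisj h1 h2 /\ hunion h h1 h2 /\
      sat D s h1 A /\ sat D s h2 B
  | FAnd A B => sat D s h A /\ sat D s h B
  | FOr A B => sat D s h A \/ sat D s h B
  | FEx (LV n) A => exists l, sat D (upd_l s n l) h A
  | FEx (DV n) A => exists d, sat D (upd_d s n d) h A
  end.

Definition entails (D : sid) (A B : form) : Prop :=
  forall s h, hfinite h -> sat D s h A -> sat D s h B.
Definition equiv (D : sid) (A B : form) : Prop := entails D A B /\ entails D B A.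

Definition vars_term (t : term) : list var :=
  match t with TVar x => [x] | _ => [] end.
Definition vars_patom (a : patom) : list var :=
  match a with
  | PEq t1 t2 | PNeq t1 t2 => vars_term t1 ++ vars_term t2
  | PRel _ ts => flat_map vars_term ts
  end.
Definition terms_satom (a : satom) : list term :=
  match a with
  | PointsTo x rho => x :: map snd rho
  | PredAt _ args => args
  end.
Definition vars_satom (a : satom) : list var := flat_map vars_term (terms_satom a).
Definition vars_rule (r : rule) : list var :=
  flat_map vars_patom (rpure r) ++ flat_map vars_satom (rspat r).

Definition gvert (S : list satom) (x : nat) : Prop :=
  exists a, In a S /\ In (LV x) (vars_satom a).
Definition gedge (S : list satom) (x y : nat) : Prop :=
  exists rho, In (PointsTo (TVar (LV x)) rho) S /\ In (TVar (LV y)) (map snd rho).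
Definition gsink (S : list satom) (x : nat) : Prop :=
  gvert S x /\ forall y, ~ gedge S x y.
Definition is_pt (a : satom) : Prop :=
  match a with PointsTo _ _ => True | _ => False end.

(** The conditions on an inductive rule [exists Z. Pi /\ S1 * S2 * P(g, beta, xi)]. *)
Definition comp_inductive_rule (P e c f h : nat) (xi : list var) (r : rule) : Prop :=
  let ps := [LV e; DV c; LV f; DV h] ++ xi in
  exists (S1 S2 : list satom) (g1 g2 : nat),
    Permutation (rspat r)
      (S1 ++ S2 ++ [PredAt P ([TVar (LV g1); TVar (DV g2); TVar (LV f); TVar (DV h)]
                              ++ map TVar xi)]) /\
    S1 <> [] /\ Forall is_pt S1 /\
    (exists l1 rho l2, S1 = l1 ++ PointsTo (TVar (LV e)) rho :: l2 /\
       forall rho', ~ In (PointsTo (TVar (LV e)) rho') (l1 ++ l2)) /\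
    (forall z, In (LV z) (vars_rule r) -> ~ In (LV z) ps -> gvert S1 z) /\
    (forall x, gvert S1 x -> clos_refl_trans nat (gedge S1) e x) /\
    (forall x, ~ clos_trans nat (gedge S1) x x) /\
    Forall (fun a => exists q x args, a = PredAt q (TVar (LV x) :: args) /\ gsink S1 x) S2 /\
    ~ In (LV g1) ps /\ ~ In (DV g2) ps /\
    (* beta does not occur in Pi, S1, S2 (nor in gamma, by the above) *)
    ~ In (LV f) (flat_map vars_patom (rpure r)) /\
    ~ In (DV h) (flat_map vars_patom (rpure r)) /\
    ~ In (LV f) (flat_map vars_satom (S1 ++ S2)) /\
    ~ In (DV h) (flat_map vars_satom (S1 ++ S2)).

Definition base_rule (e c f h : nat) : rule :=
  mkRule [PEq (TVar (LV e)) (TVar (LV f)); PEq (TVar (DV c)) (TVar (DV h))] [].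

Definition compositional (D : sid) (P : nat) : Prop :=
  exists e c f h xi,
    params (D P) = [LV e; DV c; LV f; DV h] ++ xi /\
    NoDup (params (D P)) /\
    exists l1 l2, rules (D P) = l1 ++ base_rule e c f h :: l2 /\
      l1 ++ l2 <> [] /\
      Forall (comp_inductive_rule P e c f h xi) (l1 ++ l2).

Definition completion (D : sid) (P P' : nat) (c1 c2 : term) : Prop :=
  exists e c f h xi,
    params (D P) = [LV e; DV c; LV f; DV h] ++ xi /\
    params (D P') = [LV e; DV c] ++ xi /\
    forall r', In r' (rules (D P')) <->
      (r' = mkRule [PEq (TVar (LV e)) c1; PEq (TVar (DV c)) c2] [] \/
       exists pi l1 l2 g1 g2,
         In (mkRule pi (l1 ++ PredAt P ([TVar (LV g1); TVar (DV g2); TVar (LV f); TVar (DV h)]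
                                         ++ map TVar xi) :: l2)) (rules (D P)) /\
         r' = mkRule pi (l1 ++ PredAt P' ([TVar (LV g1); TVar (DV g2)] ++ map TVar xi) :: l2)).

End SL.


Arguments TVar {Dat}.
Arguments TNil {Dat}.
Arguments PEq {L Dat}.
Arguments PNeq {L Dat}.
Arguments PRel {L Dat}.
Arguments FPure {L Dat}.
Arguments FEmp {L Dat}.
Arguments FPt {L Dat}.
Arguments FPred {L Dat}.

(** Since the hole [beta] occurs in an
    inductive rule only as the last arguments of its recursive call, it can
    be set to [c] in every unfolding of [P'], which turns a derivation of
    [P'(alpha)] into one of [P(alpha, c)]. For the composition, induct on the
    derivation of [P(alpha, beta)]: its base case forces [alpha = beta], where
    the heap of [P'(beta)] is used as it is, and at each inductive step the
    recursive call of [P] becomes one of [P']. The converse entailment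
    [P(alpha, c) => P'(alpha)] is the composition with the empty heap
    satisfying the base case of [P'(c)]. *)

From Stdlib Require Import List Permutation FunctionalExtensionality Arith.
Import ListNotations.
Set Implicit Arguments.

Scheme psat_mut := Induction for psat Sort Prop
with ssat_mut := Induction for ssat Sort Prop.

Section Heaps.
Variables (L Dat : Type).
Implicit Types h ha hb hc hr hx : heap L Dat.

Definition hjoin h1 h2 : heap L Dat :=
  fun k => match h1 k with Some v => Some v | None => h2 k end.

Lemma hunion_hjoin h1 h2 : hunion (hjoin h1 h2) h1 h2.
Proof. intro k; reflexivity. Qed.

Ltac heap_solve :=
  unfold hdisj, hunion, hjoin in *; repeat split;
  let k := fresh "k" in intro k;
  repeat match goal with H : forall k : (L * fld)%type, _ |- _ => pose proof (H k); clear H end;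
  repeat match goal with |- context [?g k] => destruct (g k) end;
  repeat match goal with H : context [?g k] |- _ => destruct (g k) end;
  intuition congruence.

Lemma hunion_left_comm h ha hb hc hbc :
  hdisj hb hc -> hunion hbc hb hc -> hdisj ha hbc -> hunion h ha hbc ->
  hdisj hb (hjoin ha hc) /\ hunion h hb (hjoin ha hc) /\ hdisj ha hc.
Proof. intros; heap_solve. Qed.

Lemma hunion_right_comm h ha hr hx har :
  hdisj ha hr -> hunion har ha hr -> hdisj har hx -> hunion h har hx ->
  hdisj ha hx /\ hdisj (hjoin ha hx) hr /\ hunion h (hjoin ha hx) hr.
Proof. intros; heap_solve. Qed.

Lemma hunion_hempty_l h h0 hx : hempty h0 -> hunion h h0 hx -> h = hx.
Proof.
  intros H0 Hu; apply functional_extensionality; intro k.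
  rewrite Hu, H0; reflexivity.
Qed.

Lemma hunion_empty_r h : hunion h h (fun _ => None).
Proof. intro k; now destruct (h k). Qed.

Lemma hdisj_empty_r h : hdisj h (fun _ => None).
Proof. intro k; now right. Qed.

End Heaps.

Section Semantics.
Variables (L Dat : Type) (lnil : L) (D : sid L Dat).
Implicit Types (s : stack L Dat) (hp : heap L Dat).

(** The induction hypothesis of [psat_mut] on a rule body, restated for each
    predicate atom of the body separately. *)
Definition pred_atoms_split (G : nat -> list (Val L Dat) -> heap L Dat -> Prop)
    s (S : list (satom Dat)) hp : Prop :=
  forall S1 q args S2, S = S1 ++ PredAt q args :: S2 ->
    exists ha hr, hdisj ha hr /\ hunion hp ha hr /\
      psat lnil D q (map (eval lnil s) args) ha /\ G q (map (eval lnil s) args) ha /\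
      ssat lnil D s (S1 ++ S2) hr.

Lemma psat_ind_split (G : nat -> list (Val L Dat) -> heap L Dat -> Prop) :
  (forall p vals hp r s, In r (rules (D p)) -> map (eval_var s) (params (D p)) = vals ->
     Forall (psat_atom lnil s) (rpure r) -> ssat lnil D s (rspat r) hp ->
     pred_atoms_split G s (rspat r) hp -> G p vals hp) ->
  forall p vals hp, psat lnil D p vals hp -> G p vals hp.
Proof.
  intros Hstep.
  apply (@psat_mut L Dat lnil D (fun p vals hp _ => G p vals hp)
                         (fun s S hp _ => pred_atoms_split G s S hp)).
  - intros; eapply Hstep; eauto.
  - intros s hp _ [|] q args S2 E; discriminate.
  - intros s x rho rest l h1 h2 hp Hx Hl Hpts Hrest IH Hd Hu [|a S1] q args S2 E;
      [discriminate|].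
    injection E as <- E.
    destruct (IH S1 q args S2 E) as (ha & hr & Hd' & Hu' & Hq & HG & Hr).
    destruct (hunion_left_comm Hd' Hu' Hd Hu) as (Hd1 & Hu1 & Hd2).
    exists ha, (hjoin h1 hr); repeat split; auto.
    eapply ssat_pt; eauto using hunion_hjoin.
  - intros s q' args' rest h1 h2 hp Hq' IHq' Hrest IH Hd Hu [|a S1] q args S2 E.
    + injection E as <- <- <-; exists h1, h2; auto.
    + injection E as <- E.
      destruct (IH S1 q args S2 E) as (ha & hr & Hd' & Hu' & Hq & HG & Hr).
      destruct (hunion_left_comm Hd' Hu' Hd Hu) as (Hd1 & Hu1 & Hd2).
      exists ha, (hjoin h1 hr); repeat split; auto.
      eapply ssat_pred; eauto using hunion_hjoin.
Qed.

Lemma ssat_insert_pred s S1 q args S2 hp ha hr :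
  ssat lnil D s (S1 ++ S2) hr -> psat lnil D q (map (eval lnil s) args) ha ->
  hdisj ha hr -> hunion hp ha hr -> ssat lnil D s (S1 ++ PredAt q args :: S2) hp.
Proof.
  revert hp ha hr; induction S1 as [|a S1 IH]; intros hp ha hr Hr Hq Hd Hu.
  - eapply ssat_pred; eauto.
  - inversion Hr; subst;
      match goal with Hd' : hdisj _ _, Hu' : hunion hr _ _ |- _ =>
        destruct (hunion_left_comm Hd' Hu' Hd Hu) as (Hd1 & Hu1 & Hd2) end.
    + eapply ssat_pt; eauto using hunion_hjoin.
    + eapply ssat_pred; eauto using hunion_hjoin.
Qed.

Definition agree_on (xs : list var) s s' : Prop :=
  forall x, In x xs -> eval_var s x = eval_var s' x.

Lemma agree_on_app xs ys s s' :
  agree_on (xs ++ ys) s s' -> agree_on xs s s' /\ agree_on ys s s'.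
Proof. intro H; split; intros x Hx; apply H, in_or_app; auto. Qed.

Lemma map_eval_agree (ts : list (term Dat)) s s' :
  agree_on (flat_map (@vars_term Dat) ts) s s' ->
  map (eval lnil s) ts = map (eval lnil s') ts.
Proof.
  intro H; apply map_ext_in; intros [x| |] Ht; simpl; auto.
  apply H, in_flat_map; exists (TVar x); simpl; auto.
Qed.

Lemma eval_agree (t : term Dat) s s' :
  agree_on (vars_term t) s s' -> eval lnil s t = eval lnil s' t.
Proof.
  destruct t as [x| |]; simpl; intro H; auto.
  apply H; simpl; auto.
Qed.

Lemma psat_pure_agree (pi : list (patom L Dat)) s s' :
  agree_on (flat_map (@vars_patom L Dat) pi) s s' ->
  Forall (psat_atom lnil s) pi -> Forall (psat_atom lnil s') pi.
Proof.
  intros H; rewrite !Forall_forall; intros Hpi a Ha.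
  assert (Ha' : agree_on (vars_patom a) s s')
    by (intros x Hx; apply H, in_flat_map; eauto).
  specialize (Hpi a Ha); destruct a as [t1 t2|t1 t2|rel ts]; simpl in *.
  1, 2: apply agree_on_app in Ha' as [H1 H2];
        now rewrite <- (eval_agree t1 H1), <- (eval_agree t2 H2).
  now rewrite <- (map_eval_agree ts Ha').
Qed.

Lemma ssat_agree S s s' hp :
  agree_on (flat_map (@vars_satom Dat) S) s s' ->
  ssat lnil D s S hp -> ssat lnil D s' S hp.
Proof.
  intros Hag Hs; revert s' Hag; induction Hs as [| s x rho rest l h1 h2 hp Hx Hl Hpts _ IH Hd Hu
                                            | s q args rest h1 h2 hp Hq _ IH Hd Hu];
    intros s' Hag; simpl in Hag.
  - now constructor.
  - apply agree_on_app in Hag as [Ha Hag].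
    unfold vars_satom in Ha; simpl in Ha; apply agree_on_app in Ha as [Hx' Hrho].
    eapply ssat_pt; eauto.
    + now rewrite <- (eval_agree x Hx').
    + erewrite map_ext_in; [exact Hpts|]; intros [fl t] Ht; simpl; f_equal.
      symmetry; apply eval_agree; intros y Hy; apply Hrho, in_flat_map.
      exists t; split; auto; apply (in_map snd _ _ Ht).
  - apply agree_on_app in Hag as [Ha Hag].
    eapply ssat_pred; eauto.
    now rewrite <- (map_eval_agree args Ha).
Qed.

Lemma eval_var_upd_l_other s n l x : x <> LV n -> eval_var (upd_l s n l) x = eval_var s x.
Proof. destruct x as [k|k]; simpl; intros; auto; destruct (Nat.eqb_spec k n); congruence. Qed.

Lemma eval_var_upd_d_other s n dd x : x <> DV n -> eval_var (upd_d s n dd) x = eval_var s x.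
Proof. destruct x as [k|k]; simpl; intros; auto; destruct (Nat.eqb_spec k n); congruence. Qed.

Lemma eval_var_upd_l_same s n l : eval_var (upd_l s n l) (LV n) = VL Dat l.
Proof. simpl; now rewrite Nat.eqb_refl. Qed.

Lemma eval_var_upd_d_same s n dd : eval_var (upd_d s n dd) (DV n) = VD L dd.
Proof. simpl; now rewrite Nat.eqb_refl. Qed.

Lemma map_eval_var_upd_l_other s n l xs :
  ~ In (LV n) xs -> map (eval_var (upd_l s n l)) xs = map (eval_var s) xs.
Proof. intro H; apply map_ext_in; intros x Hx; apply eval_var_upd_l_other; congruence. Qed.

Lemma map_eval_var_upd_d_other s n dd xs :
  ~ In (DV n) xs -> map (eval_var (upd_d s n dd)) xs = map (eval_var s) xs.
Proof. intro H; apply map_ext_in; intros x Hx; apply eval_var_upd_d_other; congruence. Qed.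

Lemma map_eval_TVar s xs : map (eval lnil s) (map TVar xs) = map (eval_var s) xs.
Proof. apply map_map. Qed.

Lemma map_eval_var_agree xs s s' :
  agree_on xs s s' -> map (eval_var s) xs = map (eval_var s') xs.
Proof. intro H; apply map_ext_in; exact H. Qed.

Lemma psat_base_rule_iff s e c f h :
  Forall (psat_atom lnil s) (rpure (base_rule L Dat e c f h)) <->
  eval_var s (LV e) = eval_var s (LV f) /\ eval_var s (DV c) = eval_var s (DV h).
Proof.
  simpl; rewrite !Forall_cons_iff; split; [intros (? & ? & _) | intros []]; auto.
Qed.

Lemma psat_completion_base_rule_iff s e c (d : Dat) :
  Forall (psat_atom lnil s) [PEq (TVar (LV e)) TNil; PEq (TVar (DV c)) (TDat d)] <->
  eval_var s (LV e) = VL Dat lnil /\ eval_var s (DV c) = VD L d.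
Proof.
  simpl; rewrite !Forall_cons_iff; split; [intros (? & ? & _) | intros []]; auto.
Qed.

Definition fill_hole s f h l dd : stack L Dat := upd_l (upd_d s h dd) f l.

Lemma eval_var_fill_hole_other s f h l dd x : x <> LV f -> x <> DV h ->
  eval_var (fill_hole s f h l dd) x = eval_var s x.
Proof.
  intros Hf Hh; unfold fill_hole.
  now rewrite eval_var_upd_l_other, eval_var_upd_d_other.
Qed.

Lemma eval_var_fill_hole_loc s f h l dd : eval_var (fill_hole s f h l dd) (LV f) = VL Dat l.
Proof. apply eval_var_upd_l_same. Qed.

Lemma eval_var_fill_hole_dat s f h l dd : eval_var (fill_hole s f h l dd) (DV h) = VD L dd.
Proof. unfold fill_hole; rewrite eval_var_upd_l_other by discriminate; apply eval_var_upd_d_same. Qed.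

Lemma agree_on_fill_hole xs s f h l dd : ~ In (LV f) xs -> ~ In (DV h) xs ->
  agree_on xs s (fill_hole s f h l dd).
Proof.
  intros Hf Hh x Hx; symmetry; apply eval_var_fill_hole_other; congruence.
Qed.

Lemma map_eval_var_fill_hole s e c f h l dd xs :
  e <> f -> c <> h -> ~ In (LV f) xs -> ~ In (DV h) xs ->
  map (eval_var (fill_hole s f h l dd)) ([LV e; DV c; LV f; DV h] ++ xs) =
  [VL Dat (sl s e); VD L (sd s c); VL Dat l; VD L dd] ++ map (eval_var s) xs.
Proof.
  intros Hef Hch Hf Hh; cbn [map app].
  rewrite <- (map_eval_var_agree (@agree_on_fill_hole xs s f h l dd Hf Hh)).
  rewrite !eval_var_fill_hole_other by congruence.
  now rewrite eval_var_fill_hole_loc, eval_var_fill_hole_dat.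
Qed.

End Semantics.

Lemma params_fresh e c f h xi : NoDup ([LV e; DV c; LV f; DV h] ++ xi) ->
  e <> f /\ c <> h /\ ~ In (LV e) xi /\ ~ In (DV c) xi /\
  ~ In (LV f) xi /\ ~ In (DV h) xi.
Proof.
  simpl; rewrite !NoDup_cons_iff; intros (He & Hc & Hf & Hh & _); simpl in *.
  repeat split; intro; subst; tauto.
Qed.

Section Completion.
Variables (L Dat : Type) (lnil : L) (D : sid L Dat).
Variables (P P' : nat) (d : Dat) (e c f h : nat) (xi : list var).

Local Notation hole_call g1 g2 :=
  (PredAt (Dat := Dat) P ([TVar (LV g1); TVar (DV g2); TVar (LV f); TVar (DV h)] ++ map TVar xi)).
Local Notation completed_call g1 g2 :=
  (PredAt (Dat := Dat) P' ([TVar (LV g1); TVar (DV g2)] ++ map TVar xi)).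

Hypothesis params_P : params (D P) = [LV e; DV c; LV f; DV h] ++ xi.
Hypothesis params_nodup : NoDup ([LV e; DV c; LV f; DV h] ++ xi).
Hypothesis base_rule_P : In (base_rule L Dat e c f h) (rules (D P)).
Hypothesis rules_P : forall r, In r (rules (D P)) ->
  r = base_rule L Dat e c f h \/ comp_inductive_rule P e c f h xi r.
Hypothesis params_P' : params (D P') = [LV e; DV c] ++ xi.
Hypothesis rules_P' : forall r', In r' (rules (D P')) <->
  (r' = mkRule [PEq (TVar (LV e)) TNil; PEq (TVar (DV c)) (TDat d)] [] \/
   exists pi S1 S2 g1 g2, In (mkRule pi (S1 ++ hole_call g1 g2 :: S2)) (rules (D P)) /\
     r' = mkRule pi (S1 ++ completed_call g1 g2 :: S2)).

Lemma inductive_rule_hole_call (r : rule L Dat) : comp_inductive_rule P e c f h xi r ->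
  exists S1 S2 g1 g2, rspat r = S1 ++ hole_call g1 g2 :: S2.
Proof.
  intros (S1 & S2 & g1 & g2 & Hperm & _).
  assert (Hin : In (hole_call g1 g2) (rspat r)).
  { apply (Permutation_in _ (Permutation_sym Hperm)), in_or_app; right.
    apply in_or_app; right; now left. }
  destruct (in_split _ _ Hin) as (S1' & S2' & Hr); eauto.
Qed.

(** Since the hole occurs only in the recursive call, every other part of an
    inductive rule is oblivious to the values of the hole. *)
Lemma inductive_rule_hole_free {pi S1 S2 g1 g2} :
  comp_inductive_rule P e c f h xi (mkRule pi (S1 ++ hole_call g1 g2 :: S2)) ->
  g1 <> f /\ g2 <> h /\
  ~ In (LV f) (flat_map (@vars_patom L Dat) pi) /\
  ~ In (DV h) (flat_map (@vars_patom L Dat) pi) /\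
  ~ In (LV f) (flat_map (@vars_satom Dat) (S1 ++ S2)) /\
  ~ In (DV h) (flat_map (@vars_satom Dat) (S1 ++ S2)).
Proof.
  intros (T1 & T2 & g1' & g2' & Hperm & _ & _ & _ & _ & _ & _ & _ & Hg1 & Hg2 &
          Hfpi & Hhpi & HfT & HhT); cbn [rpure rspat] in *.
  assert (Hcall : hole_call g1 g2 = hole_call g1' g2').
  { assert (Hin : In (hole_call g1 g2) ((T1 ++ T2) ++ [hole_call g1' g2'])).
    { rewrite <- app_assoc; apply (Permutation_in _ Hperm), in_elt. }
    apply in_app_or in Hin as [Hin | [Hin | []]]; auto.
    exfalso; apply HfT, in_flat_map; exists (hole_call g1 g2); split; auto.
    unfold vars_satom; simpl; auto. }
  injection Hcall as <- <-.
  rewrite app_assoc in Hperm; apply Permutation_app_inv with (l3 := T1 ++ T2) (l4 := [])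
    in Hperm; rewrite app_nil_r in Hperm.
  assert (Hvars : forall x, In x (flat_map (@vars_satom Dat) (S1 ++ S2)) ->
                            In x (flat_map (@vars_satom Dat) (T1 ++ T2))).
  { intros x Hx; apply in_flat_map in Hx as (a & Ha & Hxa).
    apply in_flat_map; exists a; split; auto; exact (Permutation_in _ Hperm Ha). }
  repeat split; auto; intros ->; simpl in *; tauto.
Qed.

Lemma psat_completion_fill_hole le dc vx hp :
  psat lnil D P' ([VL Dat le; VD L dc] ++ vx) hp ->
  psat lnil D P ([VL Dat le; VD L dc; VL Dat lnil; VD L d] ++ vx) hp.
Proof.
  revert le dc vx hp; destruct (params_fresh params_nodup) as (Hef & Hch & _ & _ & Hfxi & Hhxi).
  enough (H : forall q vals hp, psat lnil D q vals hp -> q = P' ->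
    forall le dc vx, vals = [VL Dat le; VD L dc] ++ vx ->
    psat lnil D P ([VL Dat le; VD L dc; VL Dat lnil; VD L d] ++ vx) hp) by eauto.
  refine (psat_ind_split _).
  intros p vals hp r s Hr Hps Hpure Hspat Hsplit -> le dc vx ->.
  rewrite params_P' in Hps; injection Hps as Hle Hdc Hvx.
  set (s' := fill_hole s f h lnil d).
  assert (Hps' : map (eval_var s') (params (D P)) =
                 [VL Dat le; VD L dc; VL Dat lnil; VD L d] ++ vx).
  { rewrite params_P; unfold s'; rewrite map_eval_var_fill_hole by assumption.
    now rewrite Hle, Hdc, Hvx. }
  apply rules_P' in Hr as [-> | (pi & S1 & S2 & g1 & g2 & HrP & ->)].
  - apply psat_completion_base_rule_iff in Hpure as [He Hc].
    apply (psat_rule _ _ base_rule_P Hps').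
    + apply psat_base_rule_iff; unfold s'.
      rewrite eval_var_fill_hole_loc, eval_var_fill_hole_dat.
      rewrite (@eval_var_fill_hole_other L Dat s f h lnil d (LV e)),
        (@eval_var_fill_hole_other L Dat s f h lnil d (DV c)) by congruence.
      now rewrite He, Hc.
    + inversion Hspat; now constructor.
  - destruct (rules_P _ HrP) as [Hbase | Hind].
    { injection Hbase as _ Hnil; symmetry in Hnil; now apply app_cons_not_nil in Hnil. }
    destruct (inductive_rule_hole_free Hind) as (Hg1 & Hg2 & Hfpi & Hhpi & HfS & HhS).
    destruct (Hsplit S1 _ _ S2 eq_refl) as (ha & hr & Hd & Hu & _ & IH & Hrest).
    cbn [map eval app] in IH; rewrite map_eval_TVar, Hvx in IH.
    specialize (IH eq_refl _ _ _ eq_refl).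
    apply (psat_rule _ _ HrP Hps'); cbn [rpure rspat].
    + exact (psat_pure_agree (agree_on_fill_hole _ s f h lnil d Hfpi Hhpi) Hpure).
    + eapply ssat_insert_pred; [ | | exact Hd | exact Hu].
      * exact (ssat_agree (agree_on_fill_hole _ s f h lnil d HfS HhS) Hrest).
      * change ([@TVar Dat (LV g1); TVar (DV g2); TVar (LV f); TVar (DV h)] ++ map TVar xi)
          with (map (@TVar Dat) ([LV g1; DV g2; LV f; DV h] ++ xi)).
        unfold s'; rewrite map_eval_TVar, map_eval_var_fill_hole, Hvx by assumption.
        exact IH.
Qed.

Lemma psat_plug_completion le dc lf dh vx hp hx hh :
  psat lnil D P ([VL Dat le; VD L dc; VL Dat lf; VD L dh] ++ vx) hp ->
  psat lnil D P' ([VL Dat lf; VD L dh] ++ vx) hx ->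
  hdisj hp hx -> hunion hh hp hx ->
  psat lnil D P' ([VL Dat le; VD L dc] ++ vx) hh.
Proof.
  revert le dc lf dh vx hp hx hh.
  enough (H : forall q vals hp, psat lnil D q vals hp -> q = P ->
    forall le dc lf dh vx, vals = [VL Dat le; VD L dc; VL Dat lf; VD L dh] ++ vx ->
    forall hx hh, psat lnil D P' ([VL Dat lf; VD L dh] ++ vx) hx ->
    hdisj hp hx -> hunion hh hp hx -> psat lnil D P' ([VL Dat le; VD L dc] ++ vx) hh)
    by eauto.
  refine (psat_ind_split _).
  intros p vals hp r s Hr Hps Hpure Hspat Hsplit -> le dc lf dh vx -> hx hh Hx Hd Hu.
  rewrite params_P in Hps; injection Hps as Hle Hdc Hlf Hdh Hvx.
  destruct (rules_P _ Hr) as [-> | Hind].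
  - apply psat_base_rule_iff in Hpure as [He Hc]; simpl in He, Hc.
    assert (Hemp : hempty hp) by (inversion Hspat; assumption).
    rewrite (hunion_hempty_l Hemp Hu).
    replace le with lf by congruence; replace dc with dh by congruence; exact Hx.
  - destruct (inductive_rule_hole_call Hind) as (S1 & S2 & g1 & g2 & Hrs).
    destruct (Hsplit S1 _ _ S2 Hrs) as (ha & hr & Hdar & Huar & _ & IH & Hrest).
    simpl in IH; rewrite map_eval_TVar, Hlf, Hdh, Hvx in IH.
    destruct (hunion_right_comm Hdar Huar Hd Hu) as (Hdax & Hdr & Hur).
    specialize (IH eq_refl _ _ _ _ _ eq_refl hx _ Hx Hdax (hunion_hjoin ha hx)).
    apply (psat_rule _ (mkRule (rpure r) (S1 ++ completed_call g1 g2 :: S2)) (s := s)).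
    + apply rules_P'; right; exists (rpure r), S1, S2, g1, g2; split; auto.
      destruct r as [pi sp]; simpl in Hrs; now subst sp.
    + rewrite params_P'; simpl; now rewrite Hle, Hdc, Hvx.
    + exact Hpure.
    + eapply ssat_insert_pred; [exact Hrest | | exact Hdr | exact Hur].
      cbn [map eval app]; now rewrite map_eval_TVar, Hvx.
Qed.

Lemma psat_completion_empty s :
  psat lnil D P' ([VL Dat lnil; VD L d] ++ map (eval_var s) xi) (fun _ => None).
Proof.
  destruct (params_fresh params_nodup) as (_ & _ & Hexi & Hcxi & _ & _).
  set (s' := upd_l (upd_d s c d) e lnil).
  apply (psat_rule _ (mkRule [PEq (TVar (LV e)) TNil; PEq (TVar (DV c)) (TDat d)] [])
           (s := s')).
  - apply rules_P'; now left.
  - rewrite params_P'; cbn [map app]; unfold s'.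
    rewrite map_eval_var_upd_l_other, map_eval_var_upd_d_other by assumption.
    now rewrite eval_var_upd_l_same, eval_var_upd_l_other, eval_var_upd_d_same
      by discriminate.
  - apply psat_completion_base_rule_iff; unfold s'.
    now rewrite eval_var_upd_l_same, eval_var_upd_l_other, eval_var_upd_d_same
      by discriminate.
  - now constructor.
Qed.

Lemma psat_fill_hole_completion s hp :
  psat lnil D P ([VL Dat (sl s e); VD L (sd s c); VL Dat lnil; VD L d] ++
                 map (eval_var s) xi) hp ->
  psat lnil D P' ([VL Dat (sl s e); VD L (sd s c)] ++ map (eval_var s) xi) hp.
Proof.
  intro HP.
  exact (psat_plug_completion HP (psat_completion_empty s) (hdisj_empty_r hp)
           (hunion_empty_r hp)).
Qed.

End Completion.

Lemma compositional_rules (L Dat : Type) (D : sid L Dat) P e c f h xi :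
  compositional D P -> params (D P) = [LV e; DV c; LV f; DV h] ++ xi ->
  NoDup ([LV e; DV c; LV f; DV h] ++ xi) /\ In (base_rule L Dat e c f h) (rules (D P)) /\
  forall r, In r (rules (D P)) ->
    r = base_rule L Dat e c f h \/ comp_inductive_rule P e c f h xi r.
Proof.
  intros (e' & c' & f' & h' & xi' & Hpar' & Hnd & R1 & R2 & Hrules & _ & Hind) Hpar.
  rewrite Hpar in Hpar'; injection Hpar' as <- <- <- <- <-.
  rewrite Forall_forall in Hind.
  rewrite Hpar in Hnd; repeat split; auto; rewrite Hrules.
  - apply in_elt.
  - intros r Hr; apply in_elt_inv in Hr as [-> | Hr]; auto.
Qed.

Lemma completion_rules (L Dat : Type) (D : sid L Dat) P P' c1 c2 e c f h xi :
  completion D P P' c1 c2 -> params (D P) = [LV e; DV c; LV f; DV h] ++ xi ->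
  params (D P') = [LV e; DV c] ++ xi /\
  forall r', In r' (rules (D P')) <->
    (r' = mkRule [PEq (TVar (LV e)) c1; PEq (TVar (DV c)) c2] [] \/
     exists pi S1 S2 g1 g2,
       In (mkRule pi (S1 ++ PredAt P ([TVar (LV g1); TVar (DV g2); TVar (LV f); TVar (DV h)]
                                      ++ map TVar xi) :: S2)) (rules (D P)) /\
       r' = mkRule pi (S1 ++ PredAt P' ([TVar (LV g1); TVar (DV g2)] ++ map TVar xi) :: S2)).
Proof.
  intros (e' & c' & f' & h' & xi' & HparP & HparP' & Hrules) Hpar.
  rewrite Hpar in HparP; injection HparP as <- <- <- <- <-; auto.
Qed.

Theorem theorem2 (L Dat : Type) (lnil : L) (D : sid L Dat) (P P' : nat) (d : Dat)
  (e c f h : nat) (xi : list var) :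
  compositional D P ->
  params (D P) = [LV e; DV c; LV f; DV h] ++ xi ->
  completion D P P' TNil (TDat d) ->
  equiv lnil D (FPred P' (map TVar ([LV e; DV c] ++ xi)))
              (FPred P ([TVar (LV e); TVar (DV c); TNil; TDat d] ++ map TVar xi)) /\
  entails lnil D
    (FEx (LV f) (FEx (DV h)
       (FStar (FPred P (map TVar ([LV e; DV c; LV f; DV h] ++ xi)))
              (FPred P' (map TVar ([LV f; DV h] ++ xi))))))
    (FPred P' (map TVar ([LV e; DV c] ++ xi))).
Proof.
  intros Hcomp Hpar Hcompl.
  destruct (compositional_rules Hcomp Hpar) as (Hnd & Hbase & Hrules).
  destruct (completion_rules Hcompl Hpar) as (Hpar' & Hrules').
  destruct (params_fresh Hnd) as (Hef & Hch & _ & _ & Hfxi & Hhxi).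
  split; [split|]; intros s hh _ Hsat.
  - simpl in Hsat |- *; rewrite map_eval_TVar in Hsat |- *.
    exact (psat_completion_fill_hole Hpar Hnd Hbase Hrules Hpar' Hrules' Hsat).
  - simpl in Hsat |- *; rewrite map_eval_TVar in Hsat |- *.
    exact (psat_fill_hole_completion P' Hpar Hnd Hrules Hpar' Hrules' s Hsat).
  - cbn [sat] in Hsat |- *; destruct Hsat as (l & dd & h1 & h2 & Hd & Hu & H1 & H2).
    change (upd_d (upd_l s f l) h dd) with (fill_hole s f h l dd) in H1, H2.
    rewrite map_eval_TVar in H1, H2 |- *.
    rewrite map_eval_var_fill_hole in H1 by assumption.
    cbn [map app] in H2.
    rewrite <- (map_eval_var_agree (agree_on_fill_hole _ s f h l dd Hfxi Hhxi)) in H2.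
    rewrite eval_var_fill_hole_loc, eval_var_fill_hole_dat in H2.
    exact (psat_plug_completion Hpar Hrules Hpar' Hrules' H1 H2 Hd Hu).
Qed.
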